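(* Let $H$ be a connected graph of order $m\ge 3$. (a) If $\textnormal{diam}(H)=1$, then $O_{\rm SR}(K_1\odot H)=\mathcal{B}$. (b) If $\textnormal{diam}(H)=2$, then $O_{\rm SR}(K_1\odot H)\in\{\mathcal{M},\mathcal{N},\mathcal{B}\}$. (c) If $\textnormal{diam}(H)=3$, then $O_{\rm SR}(K_1\odot H)\in\{\mathcal{N},\mathcal{B}\}$. (d) If $\textnormal{diam}(H)\ge 4$, then $O_{\rm SR}(K_1\odot H)=\mathcal{B}$.
   Context: All graphs are finite, simple and undirected; $\textnormal{diam}$ denotes diameter. $K_1\odot H$ (the corona product of $K_1$ with $H$) is the graph obtained from $H$ by adding one new vertex adjacent to every vertex of $H$. A set $S\subseteq V(X)$ is a strong resolving set of a connected graph $X$ if for all distinct $x,y\in V(X)$ there exists $z\in S$ such that $x$ lies on a $y$–$z$ geodesic or $y$ lies on an $x$–$z$ geodesic. The Maker–Breaker strong resolving game on $X$: Maker and Breaker alternately select a not-yet-chosen vertex of $X$; Maker wins if the vertices he selects contain a strong resolving set of $X$, Breaker wins otherwise. In the M-game Maker moves first, in the B-game Breaker moves first. $O_{\rm SR}(X)=\mathcal{M}$ if Maker has a winning strategy in both games, $\mathcal{B}$ if Breaker has a winning strategy in both, and $\mathcal{N}$ if the first player has a winning strategy in each. *)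

From mathcomp Require Import all_boot.
Set Implicit Arguments. Unset Strict Implicit. Unset Printing Implicit Defensive.

Section Graphs.
Variable V : finType.
Variable e : rel V.

Definition simple_graph := symmetric e /\ irreflexive e.

Fixpoint within (n : nat) (x y : V) : bool :=
  if n is n'.+1 then (x == y) || [exists z, e x z && within n' z y]
  else x == y.

Definition connected_graph := forall x y : V, exists n, within n x y.

(* graph distance (meaningful for connected graphs, where it is < #|V|) *)
Definition dist (x y : V) : nat :=
  \big[minn/#|V|]_(n < #|V| | within n x y) (n : nat).

Definition diam : nat := \max_(x : V) \max_(y : V) dist x y.

Definition on_geodesic (x y z : V) : bool := dist y x + dist x z == dist y z.

Definition strong_resolving (S : {set V}) : bool :=
  [forall x, forall y, (x != y) ==>
     [exists z in S, on_geodesic x y z || on_geodesic y x z]].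

(* The game ends when every vertex is chosen; Maker wins iff
   his set contains (equivalently, since the property is monotone, is) a strong
   resolving set.  win fuel M B t = Maker has a winning strategy from the state. *)
Fixpoint mb_win (fuel : nat) (M B : {set V}) (maker_turn : bool) : bool :=
  if fuel is f.+1 then
    let free := ~: (M :|: B) in
    if free == set0 then [exists S : {set V}, (S \subset M) && strong_resolving S]
    else if maker_turn then [exists v in free, mb_win f (v |: M) B false]
    else [forall v in free, mb_win f M (v |: B) true]
  else [exists S : {set V}, (S \subset M) && strong_resolving S].

Definition maker_wins_Mgame : bool := mb_win #|V|.+1 set0 set0 true.
Definition maker_wins_Bgame : bool := mb_win #|V|.+1 set0 set0 false.

End Graphs.

Inductive outcome := Out_M | Out_N | Out_B | Out_second.
(* Out_second: second player wins both games (not one of the paper's three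
   classes; listed so that O_SR is total). *)

Definition O_SR (V : finType) (e : rel V) : outcome :=
  match maker_wins_Mgame e, maker_wins_Bgame e with
  | true, true => Out_M
  | true, false => Out_N
  | false, false => Out_B
  | false, true => Out_second
  end.

Definition corona (T : finType) (e : rel T) : rel (option T) :=
  fun u v => match u, v with
  | Some x, Some y => e x y
  | None, Some _ | Some _, None => true
  | None, None => false
  end.

(* In K_1 (.) H all distances are at most 2, so two distinct vertices u, w of H that
   are not adjacent in H are at distance 2 in both directions.  Then neither lies on a
   geodesic from the other to a third vertex, and every strong resolving set contains u
   or w: call such a pair forced.  If forced pairs form a path p - v - q, Breaker,
   moving first, takes v and then whichever of p, q Maker leaves, so Maker misses a
   forced pair.  If they form a 4-cycle, any first move of Maker leaves such a path
   untouched, so Breaker also wins moving second.  A complete H makes every pair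
   forced, diameter 3 gives a forced path, and diameter at least 4 a forced 4-cycle.
   For diameter 2 it only remains to rule out that the second player wins both games:
   an extra vertex never hurts Maker, so a Maker win in the B-game yields one in the
   M-game. *)

From mathcomp Require Import all_boot zify.

Set Implicit Arguments.
Unset Strict Implicit.
Unset Printing Implicit Defensive.

Section Graphs.
Variables (V : finType) (e : rel V).

Lemma within_refl n x : within e n x x.
Proof. by case: n => [|n] /=; rewrite eqxx. Qed.

Lemma within_step n x y z : e x y -> within e n y z -> within e n.+1 x z.
Proof. by move=> exy wyz /=; apply/orP; right; apply/existsP; exists y; rewrite exy. Qed.

Lemma within1E x y : within e 1 x y = (x == y) || e x y.
Proof.
rewrite /=; congr (_ || _); apply/existsP/idP => [[z /andP[exz /eqP <-]] // | exy].
by exists y; rewrite exy eqxx.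
Qed.

Lemma dist_le n x y : n < #|V| -> within e n x y -> dist e x y <= n.
Proof.
move=> n_lt wn; rewrite /dist.
have: Ordinal n_lt \in index_enum 'I_#|V| by rewrite mem_index_enum.
elim: (index_enum _) => // i r IHr; rewrite in_cons big_cons.
case/orP => [/eqP <- | /IHr le_n]; first by rewrite wn geq_minl.
by case: ifP => // _; rewrite geq_min le_n orbT.
Qed.

Lemma dist_ge k x y : k <= #|V| -> (forall n, n < k -> ~~ within e n x y) ->
  k <= dist e x y.
Proof.
move=> k_le nw; apply: (big_ind (fun m => k <= m)) => // [a b ka kb | i wi].
  by rewrite leq_min ka kb.
by rewrite leqNgt; apply: contraL wi; apply: nw.
Qed.

Lemma dist_le_card x y : dist e x y <= #|V|.
Proof.
apply: (big_ind (fun m => m <= #|V|)) => // [a b ha hb | i _].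
  by rewrite geq_min ha.
exact: ltnW.
Qed.

Lemma within_lt_dist n x y : n < dist e x y -> ~~ within e n x y.
Proof.
move=> n_lt; apply/negP => wn.
have /dist_le/(_ wn) : n < #|V| by apply: leq_trans n_lt (dist_le_card x y).
by rewrite leqNgt n_lt.
Qed.

Lemma dist_gt0 x y : x != y -> 0 < dist e x y.
Proof.
move=> neq_xy; apply: dist_ge => [|[|n] //].
by apply/card_gt0P; exists x.
Qed.

Lemma dist_gt1 x y : 1 < #|V| -> x != y -> ~~ e x y -> 1 < dist e x y.
Proof.
move=> V_gt1 neq_xy nexy; apply: dist_ge => // -[|[|n]] // _.
by rewrite within1E negb_or neq_xy.
Qed.

Lemma dist_le_diam x y : dist e x y <= diam e.
Proof.
apply: leq_trans (leq_bigmax (F := fun x => \max_y dist e x y) x).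
exact: (leq_bigmax (F := dist e x)).
Qed.

Lemma lt_diam_dist k : k < diam e -> exists x y, k < dist e x y.
Proof.
move=> k_lt; have V_gt0 : 0 < #|V|.
  by rewrite lt0n; apply: contraTneq k_lt => /card0_eq V0; rewrite /diam big_pred0.
have [x diam_x] := eq_bigmax (fun x => \max_y dist e x y) V_gt0.
have [y xy_max] := eq_bigmax (dist e x) V_gt0.
by exists x, y; rewrite -xy_max -diam_x.
Qed.

Lemma diam1_complete : 1 < #|V| -> diam e = 1 -> forall x y, x != y -> e x y.
Proof.
move=> V_gt1 diam1 x y neq_xy; apply/contraT => nexy.
by have := dist_le_diam x y; rewrite diam1 leqNgt dist_gt1.
Qed.

Definition forced (x y : V) :=
  forall S, strong_resolving e S -> (x \in S) || (y \in S).

Lemma forcedC x y : forced x y -> forced y x.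
Proof. by move=> fxy S /fxy; rewrite orbC. Qed.

Lemma forced_diametral k x y : x != y -> (forall a b, dist e a b <= k) ->
  k <= dist e x y -> k <= dist e y x -> forced x y.
Proof.
move=> neq_xy le_k k_xy k_yx S /forallP/(_ x)/forallP/(_ y)/implyP/(_ neq_xy).
case/existsP => z /andP[zS]; rewrite /on_geodesic.
case/orP => /eqP geo.
  have [-> | neq_xz] := eqVneq x z; first by rewrite zS.
  by have := dist_gt0 neq_xz; have := le_k y z; lia.
have [-> | neq_yz] := eqVneq y z; first by rewrite zS orbT.
by have := dist_gt0 neq_yz; have := le_k x z; lia.
Qed.

Lemma forced_complete x y : 1 < #|V| -> (forall a b, a != b -> e a b) ->
  x != y -> forced x y.
Proof.
move=> V_gt1 complete neq_xy; apply: (forced_diametral (k := 1)) => //.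
- move=> a b; apply: dist_le => //; rewrite within1E.
  by have [// | /complete ->] := eqVneq a b; rewrite orbT.
- exact: dist_gt0.
- by apply: dist_gt0; rewrite eq_sym.
Qed.

Lemma mb_win_resolving f M B t : mb_win e f M B t ->
  exists2 S : {set V}, S \subset M :|: ~: B & strong_resolving e S.
Proof.
have won_sub (A C : {set V}) :
    [exists S : {set V}, (S \subset A) && strong_resolving e S] ->
    exists2 S : {set V}, S \subset A :|: ~: C & strong_resolving e S.
  case/existsP => S /andP[SA resS]; exists S => //.
  exact: subset_trans SA (subsetUl _ _).
elim: f M B t => [|f IHf] M B t /=; first exact: won_sub.
case: ifP => [_ | /negbT/set0Pn[v vF]]; first exact: won_sub.
case: t.
  case/existsP => u /andP[uF /IHf[S sub_S resS]]; exists S => //.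
  apply: subset_trans sub_S _; apply/subsetP => w; move: uF.
  by rewrite !inE negb_or => /andP[_ uB] /orP[/orP[/eqP -> | ->] | ->]; rewrite ?uB ?orbT.
move/forallP/(_ v)/implyP/(_ vF)/IHf => [S sub_S resS]; exists S => //.
apply: subset_trans sub_S _; apply/subsetP => w; rewrite !inE negb_or.
by case/orP => [| /andP[_]] ->; rewrite ?orbT.
Qed.

Lemma mb_win_forced f M B t x y : mb_win e f M B t -> forced x y ->
  x \in B -> y \in B -> (x \in M) || (y \in M).
Proof.
case/mb_win_resolving => S /subsetP sub_S resS /(_ S resS) xy_S xB yB.
by case/orP: xy_S => /sub_S; rewrite !inE ?xB ?yB /= orbF => ->; rewrite ?orbT.
Qed.

Lemma mb_win_maker_move f M B : ~: (M :|: B) != set0 -> mb_win e f.+1 M B true ->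
  exists2 v, v \in ~: (M :|: B) & mb_win e f (v |: M) B false.
Proof. by move=> /negbTE /= -> /existsP[v /andP[]]; exists v. Qed.

Lemma mb_win_breaker_move f M B v : v \in ~: (M :|: B) -> mb_win e f.+1 M B false ->
  mb_win e f M (v |: B) true.
Proof.
move=> vF /=; have /negbTE -> : ~: (M :|: B) != set0 by apply/set0Pn; exists v.
by move/forallP/(_ v)/implyP/(_ vF).
Qed.

Lemma mb_win_subset f (M M' B : {set V}) t : M \subset M' ->
  mb_win e f M B t -> mb_win e f M' B t.
Proof.
elim: f M M' B t => [|f IHf] M M' B t sub_M won.
  case/existsP: won => S /andP[SM resS]; apply/existsP; exists S.
  by rewrite (subset_trans SM sub_M).
have sub_free : ~: (M' :|: B) \subset ~: (M :|: B) by rewrite setCS setSU.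
rewrite /=; case: ifP => [/eqP F'0 | /negbT F'_n0].
  case/mb_win_resolving: won => S sub_S resS; apply/existsP; exists S.
  rewrite resS andbT; apply/subsetP => w /(subsetP sub_S).
  rewrite !inE => /orP[/(subsetP sub_M) // | wB].
  by apply/contraT => wM'; have := in_set0 w; rewrite -F'0 !inE negb_or wM' wB.
move: won => /=; have /negbTE -> : ~: (M :|: B) != set0.
  by apply: contraNneq F'_n0 => F0; rewrite -subset0 -F0.
case: t.
  case/existsP => v /andP[vF won].
  have [vF' | vnF'] := boolP (v \in ~: (M' :|: B)).
    by apply/existsP; exists v; rewrite vF' (IHf _ _ _ _ _ won) // setUS.
  have [w wF'] := set0Pn _ F'_n0; apply/existsP; exists w.
  rewrite wF' (IHf _ _ _ _ _ won) //; apply/subsetP => u; rewrite !inE.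
  case/orP => [/eqP -> | /(subsetP sub_M) ->]; last by rewrite orbT.
  move: vF vnF'; rewrite !inE !negb_or => /andP[_ ->].
  by rewrite andbT negbK => ->; rewrite orbT.
move=> /forallP won; apply/forallP => v; apply/implyP => vF'.
exact: IHf sub_M (implyP (won v) (subsetP sub_free v vF')).
Qed.

Lemma card_setC_setU1 (A : {set V}) v : v \notin A -> #|~: (v |: A)| < #|~: A|.
Proof.
move=> vA; have := cardsC (v |: A); have := cardsC A; have := cardsU1 v A.
by rewrite vA; lia.
Qed.

Lemma mb_win_fuel f g M B t : #|~: (M :|: B)| < f -> #|~: (M :|: B)| < g ->
  mb_win e f M B t = mb_win e g M B t.
Proof.
elim: f g M B t => [|f IHf] [|g] M B t //= lt_f lt_g.
case: ifP => // _; case: t.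
  apply: eq_existsb => v; case vF: (v \in _) => //=.
  have : #|~: (v |: M :|: B)| < #|~: (M :|: B)|.
    by rewrite -setUA card_setC_setU1 // -in_setC.
  by move=> lt_v; apply: IHf; apply: leq_trans lt_v _.
apply: eq_forallb => v; case vF: (v \in _) => //=.
have : #|~: (M :|: (v |: B))| < #|~: (M :|: B)|.
  by rewrite setUCA card_setC_setU1 // -in_setC.
by move=> lt_v; apply: IHf; apply: leq_trans lt_v _.
Qed.

Lemma maker_wins_Mgame_of_Bgame : maker_wins_Bgame e -> maker_wins_Mgame e.
Proof.
rewrite /maker_wins_Bgame /maker_wins_Mgame => won /=.
case: ifP => [F0 | /negbT/set0Pn[v vF]]; first by move: won => /=; rewrite F0.
apply/existsP; exists v; rewrite vF /=.
have lt_v : #|~: (v |: set0 :|: set0)| < #|V|.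
  by rewrite -setUA; apply: leq_trans (card_setC_setU1 _) (max_card _); rewrite -in_setC.
rewrite -(mb_win_fuel _ (leqW lt_v) lt_v).
by apply: mb_win_subset won; rewrite sub0set.
Qed.

Definition forced_path p v q := [/\ uniq [:: p; v; q], forced p v & forced v q].

Definition forced_square a b c d :=
  [/\ uniq [:: a; b; c; d], forced a b, forced b c, forced c d & forced d a].

Lemma forced_path_card p v q : forced_path p v q -> 2 < #|V|.
Proof.
by case=> /card_uniqP uniq_pvq _ _; have := max_card (mem [:: p; v; q]); rewrite uniq_pvq.
Qed.

Lemma forced_square_rot a b c d : forced_square a b c d -> forced_square b c d a.
Proof. by case; rewrite -(rot_uniq 1). Qed.

Lemma forced_square_path a b c d :
  forced_square a b c d -> forced_path b c d /\ a \notin [:: b; c; d].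
Proof. by case=> /andP[a_bcd uniq_bcd] *. Qed.

Lemma forced_square_avoid a b c d x : forced_square a b c d ->
  exists p v q, forced_path p v q /\ x \notin [:: p; v; q].
Proof.
move=> sq; have sq1 := forced_square_rot sq; have sq2 := forced_square_rot sq1.
have sq3 := forced_square_rot sq2.
have [x_bcd | x_nbcd] := boolP (x \in [:: b; c; d]); last first.
  by exists b, c, d; case: (forced_square_path sq).
move: x_bcd; rewrite !inE => /or3P[] /eqP ->.
- by exists c, d, a; apply: forced_square_path sq1.
- by exists d, a, b; apply: forced_square_path sq2.
- by exists a, b, c; apply: forced_square_path sq3.
Qed.

Lemma breaker_wins_forced_path f M B p v q : 2 < f -> forced_path p v q ->
  p \notin M :|: B -> v \notin M :|: B -> q \notin M :|: B -> ~~ mb_win e f M B false.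
Proof.
case: f => [|[|[|f]]] // _ [uniq_pvq fpv fvq]; rewrite !inE !negb_or.
move=> /andP[pM pB] /andP[vM vB] /andP[qM qB]; apply/negP.
have [pv pq vq] : [/\ p != v, p != q & v != q].
  by move: uniq_pvq; rewrite /= !inE !negb_or andbT => /andP[/andP[-> ->] ->].
have vF : v \in ~: (M :|: B) by rewrite !inE negb_or vM vB.
move=> /(mb_win_breaker_move vF) /mb_win_maker_move[].
  by apply/set0Pn; exists p; rewrite !inE !negb_or pM pB pv.
move=> u; rewrite !inE !negb_or => /andP[uM /andP[uv uB]].
have [r [ru fvr rF]] : exists r, [/\ r != u, forced v r & r \in ~: (u |: M :|: (v |: B))].
  have [-> | up] := eqVneq u p.
    exists q; split; rewrite 1?eq_sym //.
    by rewrite !inE !negb_or qM qB (eq_sym q p) pq (eq_sym q v) vq.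
  exists p; split; first by rewrite eq_sym.
    exact: forcedC.
  by rewrite !inE !negb_or pM pB (eq_sym p u) up pv.
move=> /(mb_win_breaker_move rF) /mb_win_forced /(_ fvr).
rewrite !inE !eqxx !orbT => /(_ isT isT).
move: rF; rewrite !inE !negb_or => /andP[/andP[/negbTE -> /negbTE ->] _].
by rewrite eq_sym (negbTE uv) (negbTE vM).
Qed.

Lemma maker_loses_Bgame p v q : forced_path p v q -> ~~ maker_wins_Bgame e.
Proof.
move=> path_pvq; have V_gt2 := forced_path_card path_pvq.
by apply: breaker_wins_forced_path (leqW V_gt2) path_pvq _ _ _; rewrite !inE.
Qed.

Lemma maker_loses_Mgame a b c d : forced_square a b c d -> ~~ maker_wins_Mgame e.
Proof.
move=> sq; have [/forced_path_card V_gt2 _] := forced_square_path sq.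
apply/negP => /mb_win_maker_move[].
  by apply/set0Pn; exists a; rewrite !inE.
move=> x _; have [p [v [q [path_pvq x_pvq]]]] := forced_square_avoid x sq.
apply/negP; apply: breaker_wins_forced_path V_gt2 path_pvq _ _ _;
  by apply: contra x_pvq; rewrite !inE !orbF => /eqP ->; rewrite eqxx ?orbT.
Qed.

Lemma O_SR_forced_square a b c d : forced_square a b c d -> O_SR e = Out_B.
Proof.
move=> sq; have [path_bcd _] := forced_square_path sq.
by rewrite /O_SR (negbTE (maker_loses_Mgame sq)) (negbTE (maker_loses_Bgame path_bcd)).
Qed.

Lemma O_SR_forced_path p v q : forced_path p v q -> O_SR e = Out_N \/ O_SR e = Out_B.
Proof.
move=> /maker_loses_Bgame /negbTE; rewrite /O_SR => ->.
by case: maker_wins_Mgame; [left | right].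
Qed.

Lemma O_SR_not_second : O_SR e = Out_M \/ O_SR e = Out_N \/ O_SR e = Out_B.
Proof.
rewrite /O_SR; case Bwin: (maker_wins_Bgame e).
  by rewrite (maker_wins_Mgame_of_Bgame Bwin); left.
by case: maker_wins_Mgame; auto.
Qed.
End Graphs.

Section FarPairs.
Variables (T : finType) (e : rel T).
Hypotheses (e_sym : symmetric e) (e_irr : irreflexive e) (e_conn : connected_graph e).

Lemma exists_neighbour x y : x != y -> exists z, e x z.
Proof.
move=> neq_xy; have [[|n] /=] := e_conn x y; rewrite (negbTE neq_xy) //=.
by case/existsP => z /andP[exz _]; exists z.
Qed.

Lemma dist_gt2_neighbour a d : 2 < dist e a d ->
  exists c, [/\ e d c, uniq [:: c; a; d], ~~ e c a & ~~ e a d].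
Proof.
move=> dist_gt2; have w0 := within_lt_dist (ltnW (ltnW dist_gt2)).
have w1 := within_lt_dist (ltnW dist_gt2); have w2 := within_lt_dist dist_gt2.
have neq_ad : a != d by apply: contra w0.
have nead : ~~ e a d by apply: contra w1 => ead; apply: within_step ead (within_refl _ _ _).
have [c edc] : exists c, e d c by apply: (@exists_neighbour d a); rewrite eq_sym.
have neq_ca : c != a by apply: contraNneq nead => <-; rewrite e_sym.
have neq_cd : c != d by apply: contraTneq edc => ->; rewrite e_irr.
have neca : ~~ e c a.
  apply: contra w2 => eca; rewrite e_sym in eca.
  by apply: within_step eca (within_step _ (within_refl _ _ _)); rewrite e_sym.
by exists c; split; rewrite //= !inE !negb_or neq_ca neq_cd neq_ad.
Qed.

Lemma dist_gt3_square a d : 3 < dist e a d -> exists b c,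
  [/\ uniq [:: a; c; b; d], ~~ e a c, ~~ e c b, ~~ e b d & ~~ e d a].
Proof.
move=> dist_gt3; have w2 := within_lt_dist (ltnW dist_gt3).
have w3 := within_lt_dist dist_gt3.
have [c [edc uniq_cad neca nead]] := dist_gt2_neighbour (ltnW dist_gt3).
move: uniq_cad; rewrite /= !inE !negb_or andbT => /andP[/andP[neq_ca neq_cd] neq_ad].
have [b eab] := exists_neighbour neq_ad.
have nebd : ~~ e b d.
  by apply: contra w2 => ebd; apply: within_step eab (within_step ebd (within_refl _ _ _)).
have nebc : ~~ e b c.
  apply: contra w3 => ebc; apply: within_step eab (within_step ebc _).
  by apply: within_step (within_refl _ _ _); rewrite e_sym.
have neq_ab : a != b by apply: contraTneq eab => ->; rewrite e_irr.
have neq_cb : c != b by apply: contraNneq neca => ->; rewrite e_sym.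
have neq_bd : b != d by apply: contraNneq nead => <-.
exists b, c; split; rewrite // 1?e_sym //.
by rewrite /= !inE !negb_or (eq_sym a c) neq_ca neq_ab neq_ad neq_cb neq_cd neq_bd.
Qed.
End FarPairs.

Section Corona.
Variables (T : finType) (e : rel T).
Hypotheses (e_sym : symmetric e) (T_gt1 : 1 < #|T|).

Lemma within2_corona a b : within (corona e) 2 a b.
Proof.
have [-> | neq_ab] := eqVneq a b; first exact: within_refl.
case: a b neq_ab => [x|] [y|] // _.
- exact: within_step (isT : corona e (Some x) None) (within_step _ (within_refl _ _ _)).
- exact: within_step (within_refl _ _ _).
- exact: within_step (within_refl _ _ _).
Qed.

Lemma dist_corona_le2 a b : dist (corona e) a b <= 2.
Proof. by apply: dist_le; rewrite ?card_option ?within2_corona. Qed.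

Lemma forced_corona u w : u != w -> ~~ e u w -> forced (corona e) (Some u) (Some w).
Proof.
move=> neq_uw ne_uw.
have corona_gt1 : 1 < #|{: option T}| by rewrite card_option ltnW.
apply: (forced_diametral (k := 2)) => // [a b | |]; first exact: dist_corona_le2.
  exact: dist_gt1.
by apply: dist_gt1; rewrite //= 1?eq_sym // e_sym.
Qed.

Lemma forced_path_corona p v q : uniq [:: p; v; q] -> ~~ e p v -> ~~ e v q ->
  forced_path (corona e) (Some p) (Some v) (Some q).
Proof.
move=> uniq_pvq ne_pv ne_vq.
have [neq_pv neq_vq] : p != v /\ v != q.
  by move: uniq_pvq; rewrite /= !inE !negb_or => /and3P[/andP[-> _] -> _].
by split; [rewrite -(map_inj_uniq (@Some_inj _)) in uniq_pvq | apply: forced_corona ..].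
Qed.

Lemma forced_square_corona a b c d : uniq [:: a; b; c; d] ->
  ~~ e a b -> ~~ e b c -> ~~ e c d -> ~~ e d a ->
  forced_square (corona e) (Some a) (Some b) (Some c) (Some d).
Proof.
move=> uniq_abcd ne_ab ne_bc ne_cd ne_da.
have [neq_ab neq_bc neq_cd neq_da] : [/\ a != b, b != c, c != d & d != a].
  move: uniq_abcd; rewrite /= !inE !negb_or andbT.
  by case/and3P => /and3P[-> _ /negPf neq_ad] /andP[-> _] ->; rewrite eq_sym neq_ad.
by split; [rewrite -(map_inj_uniq (@Some_inj _)) in uniq_abcd | apply: forced_corona ..].
Qed.

Lemma corona_complete : (forall u w, u != w -> e u w) ->
  forall a b, a != b -> corona e a b.
Proof. by move=> complete [u|] [w|] //= /complete. Qed.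

End Corona.

Theorem mainTheorem12 (T : finType) (e : rel T) :
  simple_graph e -> connected_graph e -> 3 <= #|T| ->
  [/\ diam e = 1 -> O_SR (corona e) = Out_B,
      diam e = 2 -> O_SR (corona e) = Out_M \/ O_SR (corona e) = Out_N
                    \/ O_SR (corona e) = Out_B,
      diam e = 3 -> O_SR (corona e) = Out_N \/ O_SR (corona e) = Out_B
    & 4 <= diam e -> O_SR (corona e) = Out_B].
Proof.
move=> [e_sym e_irr] e_conn T_gt2; have T_gt1 := ltnW T_gt2.
split=> [diam1 | _ | diam3 | diam_ge4].
- have [x [y [z [_ [neq_xy neq_yz neq_zx]]]]] := card_gt2P T_gt2.
  have forced_all a b : a != b -> forced (corona e) a b.
    apply: forced_complete; first by rewrite card_option ltnW.
    exact: corona_complete (diam1_complete T_gt1 diam1).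
  apply: (@O_SR_forced_square _ _ None (Some x) (Some y) (Some z)).
  split; try (apply: forced_all; by rewrite ?(inj_eq (@Some_inj _))).
  by rewrite /= !inE !(inj_eq (@Some_inj _)) !negb_or neq_xy (eq_sym x z) neq_zx neq_yz.
- exact: O_SR_not_second.
- have [a [d far_ad]] : exists a d, 2 < dist e a d by apply: lt_diam_dist; rewrite diam3.
  have [c [_ uniq_cad ne_ca ne_ad]] := dist_gt2_neighbour e_sym e_irr e_conn far_ad.
  exact: O_SR_forced_path (forced_path_corona e_sym T_gt1 uniq_cad ne_ca ne_ad).
- have [a [d far_ad]] := lt_diam_dist diam_ge4.
  have [b [c [uniq_acbd ne_ac ne_cb ne_bd ne_da]]] :=
    dist_gt3_square e_sym e_irr e_conn far_ad.
  exact: O_SR_forced_square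
    (forced_square_corona e_sym T_gt1 uniq_acbd ne_ac ne_cb ne_bd ne_da).
Qed.
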